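(* For every $r\in(\tfrac13,\tfrac12]$, $\gamma(\omega_r)>4$. In particular, the simulation cost of every entangled unsteerable two-qubit Werner state exceeds $4$, which is strictly greater than that of any separable Werner state $\omega_r$, $r\in[0,\tfrac13]$.
   Context: $\omega_r=r|\Psi^-\rangle\langle\Psi^-|+(1-r)\mathbb{I}\otimes\mathbb{I}/4$ with $|\Psi^-\rangle=(|01\rangle-|10\rangle)/\sqrt2$; it is separable iff $r\le\tfrac13$. The assemblage generated from $\rho_{AB}$ by POVMs $\{M_{a|x}\}$ on $A$ is $\sigma_{a|x}=\mathrm{Tr}_A[(M_{a|x}\otimes\mathbb{I})\rho_{AB}]$; an LHS model of size $n$ is a distribution $p(i)$ on $\{1,\dots,n\}$, states $\rho_i$ on $B$ and conditional probabilities $p(a|x,i)$ with $\sigma_{a|x}=\sum_{i=1}^n p(a|x,i)p(i)\rho_i$. $\gamma(\rho_{AB})$ is the smallest $n$ such that every assemblage generated from $\rho_{AB}$ by any family of POVMs on $A$ admits an LHS model of size $n$ ($+\infty$ if no such $n$). *)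

From HB Require Import structures.
From mathcomp Require Import all_boot all_order all_algebra.
From mathcomp Require Import complex reals.
Set Implicit Arguments. Unset Strict Implicit. Unset Printing Implicit Defensive.
Import Order.TTheory GRing.Theory Num.Theory.
Local Open Scope ring_scope.
Local Open Scope complex_scope.

Section Defs.
Variable R : realType.
Local Notation C := R[i].

Definition adj {m n} (A : 'M[C]_(m, n)) : 'M[C]_(n, m) :=
  \matrix_(i, j) (A j i)^*.

(* positive semidefinite: <v, A v> >= 0 for every vector v (in the complex
   order of R[i], i.e. real and nonnegative) *)
Definition psd {n} (A : 'M[C]_n) : Prop :=
  forall v : 'cV[C]_n, 0 <= (adj v *m A *m v) 0 0.

Definition density {n} (A : 'M[C]_n) : Prop := psd A /\ \tr A = 1.

Definition povm {n k} (M : 'I_k -> 'M[C]_n) : Prop :=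
  (forall a, psd (M a)) /\ \sum_(a < k) M a = 1%:M.

(* Two-qubit operators are 4x4 matrices; the basis vector |a b> has index
   mxvec_index a b (a : system A, b : system B). *)
Definition ab (a b : 'I_2) : 'I_(2 * 2) := mxvec_index a b.

(* Tr_A[(M (x) I) rho] *)
Definition ptrA_apply (M : 'M[C]_2) (rho : 'M[C]_(2 * 2)) : 'M[C]_2 :=
  \matrix_(j, j') \sum_(i < 2) \sum_(i' < 2) M i i' * rho (ab i' j) (ab i j').

Definition assemblage {X : Type} {k} (M : X -> 'I_k -> 'M[C]_2)
  (rho : 'M[C]_(2 * 2)) : X -> 'I_k -> 'M[C]_2 :=
  fun x a => ptrA_apply (M x a) rho.

Definition LHS_model_of_size {X : Type} {k} (sigma : X -> 'I_k -> 'M[C]_2)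
  (n : nat) : Prop :=
  exists (p : 'I_n -> R) (rhoB : 'I_n -> 'M[C]_2) (q : X -> 'I_n -> 'I_k -> R),
    [/\ (forall i, 0 <= p i), \sum_(i < n) p i = 1 &
        (forall i, density (rhoB i))] /\
    [/\ (forall x i a, 0 <= q x i a),
        (forall x i, \sum_(a < k) q x i a = 1) &
        (forall x a, sigma x a = \sum_(i < n) ((q x i a * p i)%:C *: rhoB i))].

Definition all_assemblages_LHS (rho : 'M[C]_(2 * 2)) (n : nat) : Prop :=
  forall (X : Type) (k : nat) (M : X -> 'I_k -> 'M[C]_2),
    (forall x, povm (M x)) -> LHS_model_of_size (assemblage M rho) n.

(* gamma(rho) > m, unfolding "gamma = smallest n with all_assemblages_LHS
   (+oo if none)": no n <= m works. *)
Definition gamma_gt (rho : 'M[C]_(2 * 2)) (m : nat) : Prop :=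
  forall n, (n <= m)%N -> ~ all_assemblages_LHS rho n.

(* singlet |Psi^-> = (|01> - |10>)/sqrt 2 ; projector entries
   psi(x) conj(psi(y)) with the normalisation 1/2 *)
Definition psim_un (x : 'I_(2 * 2)) : C :=
  if x == ab 0 1 then 1 else if x == ab 1 0 then -1 else 0.

Definition singlet_proj : 'M[C]_(2 * 2) :=
  \matrix_(x, y) (2^-1 * (psim_un x * (psim_un y)^*)).

Definition werner (r : R) : 'M[C]_(2 * 2) :=
  r%:C *: singlet_proj + ((1 - r) / 4)%:C *: 1%:M.

End Defs.

(* Write T_r(M) = Tr_A[(M (x) I) omega_r] for the unnormalised state that a
   measurement operator M on A steers B into; it is the affine map
   T_r(M) = ((1+r)/4) tr(M) I - (r/2) M, which is invertible when r <> 0.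
   Suppose every assemblage of omega_r has an LHS model with n <= 4 hidden
   states rho_i of weights p_i.  Test it on the assemblage of all two-outcome
   measurements {E, I - E}, E ranging over qubit effects, and view 2x2
   matrices as vectors of C^4.  Then vec(T_r E) = q_E A, where A is the n x 4
   matrix with rows p_i vec(rho_i) and q_E is the response vector of the
   outcome E.  Since the effects |0><0|, |1><1|, |+><+|, |+i><+i| span all 2x2
   matrices and T_r is onto, A has rank 4; hence n = 4, A is invertible and
   q_E = vec(T_r E) A^-1 is determined.  Every state is an effect, so E = rho_i
   is allowed, and the nonnegative number sum_i q_(rho_i),i p_i evaluates, as
   a trace, to (1 + r - n r)/2 = (1 - 3r)/2 < 0 for r > 1/3. *)

From HB Require Import structures.
From mathcomp Require Import all_boot all_order all_algebra.
From mathcomp Require Import complex reals.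
From mathcomp Require Import ring lra.
Set Implicit Arguments.
Unset Strict Implicit.
Unset Printing Implicit Defensive.
Import Order.TTheory GRing.Theory Num.Theory.
Local Open Scope ring_scope.
Local Open Scope complex_scope.

Lemma ab_eq (a b c d : 'I_2) : (ab a b == ab c d) = (a == c) && (b == d).
Proof.
apply/eqP/andP => [|[/eqP-> /eqP->] //].
by move=> /cast_ord_inj /enum_rank_inj [-> ->].
Qed.

Lemma ord2P (i : 'I_2) : i = ord0 \/ i = ord_max.
Proof. by case: i => [[|[|//]] lt_i2]; [left | right]; apply: val_inj. Qed.

Lemma sum_ord2 (V : nmodType) (F : 'I_2 -> V) : \sum_(i < 2) F i = F ord0 + F ord_max.
Proof. by rewrite big_ord_recr big_ord1; congr (F _ + _); apply: val_inj. Qed.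

Section Qubit.
Variable R : realType.
Local Notation C := R[i].

Lemma trace2 (M : 'M[C]_2) : \tr M = M ord0 ord0 + M ord_max ord_max.
Proof. exact: sum_ord2. Qed.

Lemma quad_form2 (v : 'cV[C]_2) (M : 'M[C]_2) :
  (adj v *m M *m v) 0 0 =
  (v ord0 0)^* * (M ord0 ord0 * v ord0 0 + M ord0 ord_max * v ord_max 0) +
  (v ord_max 0)^* * (M ord_max ord0 * v ord0 0 + M ord_max ord_max * v ord_max 0).
Proof. by rewrite !mxE !sum_ord2 !mxE !sum_ord2 !mxE; ring. Qed.

(* Nonnegative multiples of rank-one projectors w w^* are positive:
   <v, c w w^* v> = c |<v, w>|^2. *)
Lemma psd_rank1 n (c : R) (w : 'cV[C]_n) : 0 <= c -> psd (c%:C *: (w *m adj w)).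
Proof.
move=> c_ge0 v; set x := (adj v *m w) 0 0.
have -> : (adj v *m (c%:C *: (w *m adj w)) *m v) 0 0 = c%:C * (x * x^*).
  rewrite -scalemxAr -scalemxAl mxE (mulmxA (adj v)) -mulmxA mxE big_ord1.
  congr (_ * (_ * _)); rewrite /x !mxE rmorph_sum; apply: eq_bigr => k _.
  by rewrite !mxE rmorphM /= conjCK mulrC.
by apply: mulr_ge0; [rewrite lecR | exact: mulcJ_ge0].
Qed.

(* An effect is an operator E with 0 <= E <= I; these are exactly the first
   elements of the two-outcome POVMs {E, I - E}. *)
Definition effect (E : 'M[C]_2) : Prop := psd E /\ psd (1%:M - E).

(* Every qubit state is an effect: for a trace-one 2x2 matrix rho,
   <v, (I - rho) v> = <w, rho w> with w = (-conj v_1, conj v_0). *)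
Lemma density_effect (rho : 'M[C]_2) : density rho -> effect rho.
Proof.
move=> [rho_psd tr_rho]; split=> // v.
pose w : 'cV[C]_2 := \col_k (if k == ord0 then - (v ord_max 0)^* else (v ord0 0)^*).
have -> : (adj v *m (1%:M - rho) *m v) 0 0 = (adj w *m rho *m w) 0 0.
  have rho00 : rho ord0 ord0 = 1 - rho ord_max ord_max.
    by rewrite -tr_rho trace2 addrK.
  rewrite !quad_form2 !mxE /= rho00 rmorphN /= !conjCK; ring.
exact: rho_psd.
Qed.

Definition werner_channel (r : R) (M : 'M[C]_2) : 'M[C]_2 := ptrA_apply M (werner r).

Lemma werner_channelE (r : R) (M : 'M[C]_2) :
  werner_channel r M = (((1 + r) / 4)%:C * \tr M) *: 1%:M - (r / 2)%:C *: M.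
Proof.
apply/matrixP => j j'; rewrite !mxE trace2 !sum_ord2 !mxE /psim_un !ab_eq /=.
by case: (ord2P j) => ->; case: (ord2P j') => -> /=; field.
Qed.

Lemma werner_channel_is_linear (r : R) : linear (werner_channel r).
Proof.
move=> a M N; rewrite !werner_channelE mxtraceD mxtraceZ.
by apply/matrixP => i j; rewrite !mxE; ring.
Qed.

HB.instance Definition _ (r : R) :=
  GRing.isLinear.Build C 'M[C]_2 'M[C]_2 _ (werner_channel r) (werner_channel_is_linear r).

Definition werner_channel_inv (r : R) (Y : 'M[C]_2) : 'M[C]_2 :=
  (2 / r)%:C *: ((((1 + r) / 2)%:C * \tr Y) *: 1%:M - Y).

Lemma werner_channel_invK (r : R) (Y : 'M[C]_2) :
  r != 0 -> werner_channel r (werner_channel_inv r Y) = Y.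
Proof.
move=> r_neq0; have rC_neq0 : r%:C != 0 by rewrite eq_complex /= eqxx andbT.
apply/matrixP => i j; rewrite werner_channelE trace2 !mxE trace2.
by case: (ord2P i) => ->; case: (ord2P j) => -> /=; field.
Qed.

Lemma effect_rank1 (E : 'M[C]_2) (c c' : R) (w w' : 'cV[C]_2) :
  0 <= c -> 0 <= c' -> E = c%:C *: (w *m adj w) ->
  1%:M - E = c'%:C *: (w' *m adj w') -> effect E.
Proof.
move=> c_ge0 c'_ge0 E_rank1 coE_rank1.
by split; [rewrite E_rank1 | rewrite coE_rank1]; apply: psd_rank1.
Qed.

Definition mx2 (a b c d : C) : 'M[C]_2 :=
  \matrix_(i, j) if i == ord0 then (if j == ord0 then a else b)
                 else (if j == ord0 then c else d).

Definition cv2 (a b : C) : 'cV[C]_2 := \col_k (if k == ord0 then a else b).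

Definition proj0 : 'M[C]_2 := mx2 1 0 0 0.
Definition proj1 : 'M[C]_2 := mx2 0 0 0 1.
Definition proj_plus : 'M[C]_2 := 2^-1 *: mx2 1 1 1 1.
Definition proj_plus_i : 'M[C]_2 := 2^-1 *: mx2 1 (- 'i%R) 'i%R 1.

Ltac entrywise := apply/matrixP;
  do 2 (let k := fresh "k" in move=> k; case: (ord2P k) => ->);
  rewrite !mxE ?big_ord1 ?mxE /=.

Ltac complex_field := simpc;
  apply/eqP; rewrite eq_complex /=; apply/andP; split; apply/eqP; field.

Lemma proj0_effect : effect proj0.
Proof.
by apply: (@effect_rank1 _ 1 1 (cv2 1 0) (cv2 0 1)) => //; entrywise; complex_field.
Qed.

Lemma proj1_effect : effect proj1.
Proof.
by apply: (@effect_rank1 _ 1 1 (cv2 0 1) (cv2 1 0)) => //; entrywise; complex_field.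
Qed.

Lemma proj_plus_effect : effect proj_plus.
Proof.
apply: (@effect_rank1 _ 2^-1 2^-1 (cv2 1 1) (cv2 1 (-1))); rewrite ?invr_ge0 ?ler0n //.
all: by entrywise; complex_field.
Qed.

Lemma proj_plus_i_effect : effect proj_plus_i.
Proof.
apply: (@effect_rank1 _ 2^-1 2^-1 (cv2 1 'i%R) (cv2 1 (-'i%R)));
  rewrite ?invr_ge0 ?ler0n //.
all: by entrywise; complex_field.
Qed.

Lemma effects_span (M : 'M[C]_2) : exists l0 l1 lp li : C,
  M = l0 *: proj0 + l1 *: proj1 + lp *: proj_plus + li *: proj_plus_i.
Proof.
have i_neq0 : 'i%R != 0 :> C := neq0Ci _.
pose lp := M ord0 ord_max + M ord_max ord0.
pose li := (M ord_max ord0 - M ord0 ord_max) / 'i%R.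
exists (M ord0 ord0 - (lp + li) / 2), (M ord_max ord_max - (lp + li) / 2), lp, li.
by entrywise; rewrite /lp /li; field.
Qed.

Lemma row_full_channel_images (r : R) m (B : 'M[C]_(m, 2 * 2)) : r != 0 ->
  (forall E, effect E -> (mxvec (werner_channel r E) <= B)%MS) -> row_full B.
Proof.
move=> r_neq0 B_effects.
have B_scaled E l : effect E -> (mxvec (werner_channel r (l *: E)) <= B)%MS.
  by move=> E_effect; rewrite !linearZ; apply/scalemx_sub/B_effects.
rewrite -sub1mx; apply/row_subP => k.
rewrite -[row k _]vec_mxK; set Y := vec_mx _.
rewrite -(werner_channel_invK Y r_neq0).
have [l0 [l1 [lp [li ->]]]] := effects_span (werner_channel_inv r Y).
rewrite !(linearD (werner_channel r)) !linearD.
by do 3 ?apply: addmx_sub; apply: B_scaled;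
  [exact: proj0_effect | exact: proj1_effect | exact: proj_plus_effect |
   exact: proj_plus_i_effect].
Qed.

Definition effect_type : Type := {E : 'M[C]_2 | effect E}.

Definition binary_measurement (E : effect_type) (a : 'I_2) : 'M[C]_2 :=
  if a == ord0 then sval E else 1%:M - sval E.

Lemma binary_measurement_povm (E : effect_type) : povm (binary_measurement E).
Proof.
split; last by rewrite sum_ord2 /binary_measurement /= addrC subrK.
by case: E => E [E_psd coE_psd] a; rewrite /binary_measurement; case: ifP.
Qed.

(* An LHS model of the first outcomes of the effect assemblage: hidden states
   rho_i with weights p_i, and q E i the probability that hidden state i
   answers E. *)
Section LHSModel.
Variables (r : R) (n : nat) (p : 'I_n -> R) (rho : 'I_n -> 'M[C]_2).
Variable q : effect_type -> 'I_n -> R.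
Hypothesis rho_density : forall i, density (rho i).
Hypothesis model : forall E : effect_type,
  werner_channel r (sval E) = \sum_i ((q E i * p i)%:C *: rho i).

Definition weighted_states : 'M[C]_(n, 2 * 2) := \matrix_i ((p i)%:C *: mxvec (rho i)).

Definition response (E : effect_type) : 'rV[C]_n := \row_i (q E i)%:C.

Lemma model_mxvec (E : effect_type) :
  mxvec (werner_channel r (sval E)) = response E *m weighted_states.
Proof.
rewrite model linear_sum mulmx_sum_row; apply: eq_bigr => i _.
by rewrite rowK mxE linearZ /= scalerA rmorphM.
Qed.

Lemma weighted_states_full : r != 0 -> row_full weighted_states.
Proof.
move=> r_neq0; apply: (row_full_channel_images r_neq0) => E E_effect.
by rewrite (model_mxvec (exist _ E E_effect)) submxMl.
Qed.

Definition state_effect (i : 'I_n) : effect_type :=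
  exist _ (rho i) (density_effect (rho_density i)).

Definition self_response : R := \sum_i q (state_effect i) i * p i.

(* When the weighted states form an invertible matrix A (with inverse P), the
   responses are q_E = vec(T_r E) P and the self-response is a trace. *)
Lemma self_responseE : row_full weighted_states -> row_free weighted_states ->
  self_response = (1 + r - n%:R * r) / 2.
Proof.
move=> full free; set A := weighted_states; set P := pinvmx A.
have PA1 : P *m A = 1%:M by rewrite -[P]mul1mx mulmxKpV ?submx_full.
have responseE E : response E = mxvec (werner_channel r (sval E)) *m P.
  by rewrite model_mxvec mulmxKp.
have tr_rho i : \tr (rho i) = 1 by case: (rho_density i).
have rowA i : (p i)%:C *: mxvec (werner_channel r (rho i)) =
    (((1 + r) / 4)%:C * (p i)%:C) *: mxvec 1%:M - (r / 2)%:C *: row i A.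
  rewrite werner_channelE tr_rho mulr1 rowK linearB !linearZ /= scalerDr !scalerA.
  by rewrite ![(p i)%:C * _]mulrC.
pose al := mxvec (1%:M : 'M[C]_2) *m P.
(* vec(I) = al A = sum_i al_i p_i vec(rho_i); take traces. *)
have weights : \sum_i (p i)%:C * al 0 i = 2.
  have := congr1 (fun v => \tr (vec_mx v)) (mulmxA (mxvec 1%:M) P A).
  rewrite /= PA1 mulmx1 mxvecK mxtrace1 mulmx_sum_row !linear_sum /= => ->.
  by apply: eq_bigr => i _; rewrite rowK !linearZ /= mxvecK tr_rho mulr1 mulrC.
have : self_response%:C = ((1 + r - n%:R * r) / 2)%:C; last by case.
rewrite rmorph_sum /=.
transitivity (\sum_i (((1 + r) / 4)%:C * ((p i)%:C * al 0 i) - (r / 2)%:C * (A *m P) i i)).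
  apply: eq_bigr => i _.
  have -> : (q (state_effect i) i * p i)%:C = ((p i)%:C *: response (state_effect i)) 0 i.
    by rewrite !mxE rmorphM mulrC.
  by rewrite responseE scalemxAl rowA mulmxBl -!scalemxAl -row_mul !mxE mulrA.
rewrite sumrB -!mulr_sumr weights (mulmxVp free) (mxtrace1 _ n : \sum_i _ = _).
rewrite -!(rmorph_nat (@real_complex R)) -!rmorphM -rmorphB; congr (_%:C).
by field.
Qed.
End LHSModel.
End Qubit.

Local Close Scope complex_scope.

Theorem corollary1 (R : realType) (r : R) :
  3^-1 < r -> r <= 2^-1 -> gamma_gt (werner r) 4.
Proof.
move=> r_gt _ n n_le4 all_lhs.
have r_neq0 : r != 0 by apply: lt0r_neq0; apply: lt_trans r_gt; rewrite invr_gt0 ltr0n.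
have [p [rho [q [[p_ge0 _ rho_density] [q_ge0 _ model]]]]] :=
  all_lhs _ _ _ (@binary_measurement_povm R).
pose q0 E i := q E i ord0.
have model0 E : werner_channel r (sval E) = \sum_i ((q0 E i * p i)%:C *: rho i)%C.
  exact: model E ord0.
(* The weighted states have rank 4 and at most 4 rows: they are invertible. *)
have full := weighted_states_full model0 r_neq0.
have free : row_free (weighted_states p rho).
  by rewrite /row_free eqn_leq rank_leq_row (eqP full).
have n4 : n = 4 by rewrite -(eqP free) (eqP full).
have self_ge0 : 0 <= self_response p q0 rho_density.
  by apply: sumr_ge0 => i _; apply: mulr_ge0; [exact: q_ge0 | exact: p_ge0].
move: self_ge0; rewrite (self_responseE rho_density model0 full free) n4.
lra.
Qed.
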